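(* Let $(X,*,0)$ be a solid weak BCC-algebra. Then for all $a\in I(X)$ and all $x\in B(a)$ we have $x*(x*a)=a$.
   Context: A weak BCC-algebra is a set $X$ with a binary operation $*$ and a constant $0$ satisfying, for all $x,y,z\in X$: (i) $((x*y)*(z*y))*(x*z)=0$; (ii) $x*x=0$; (iii) $x*0=x$; (iv) $x*y=y*x=0$ implies $x=y$. The relation $x\leqslant y$ iff $x*y=0$ is a partial order on $X$. Let $I(X)$ be the set of minimal elements of $X$ with respect to $\leqslant$. For $a\in I(X)$ the branch initiated by $a$ is $B(a)=\{x\in X: a\leqslant x\}$; ''belonging to the same branch'' means lying in a common $B(a)$. A weak BCC-algebra is called (left) solid if $(x*y)*z=(x*z)*y$ holds for all $x,y$ belonging to the same branch and all $z\in X$. *)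

(* Plain Rocq (no library needed). A weak BCC-algebra is given as a carrier
   type X with a binary operation op (written x * y in the paper) and a
   constant z (the paper's 0). *)

Definition weak_BCC {X : Type} (op : X -> X -> X) (z : X) : Prop :=
  (forall x y w, op (op (op x y) (op w y)) (op x w) = z) /\
  (forall x, op x x = z) /\
  (forall x, op x z = x) /\
  (forall x y, op x y = z -> op y x = z -> x = y).

Definition bcc_le {X : Type} (op : X -> X -> X) (z : X) (x y : X) : Prop :=
  op x y = z.

Definition minimal_elt {X : Type} (op : X -> X -> X) (z : X) (a : X) : Prop :=
  forall x, bcc_le op z x a -> x = a.

Definition in_branch {X : Type} (op : X -> X -> X) (z : X) (a x : X) : Prop :=
  bcc_le op z a x.

Definition same_branch {X : Type} (op : X -> X -> X) (z : X) (x y : X) : Prop :=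
  exists a, minimal_elt op z a /\ in_branch op z a x /\ in_branch op z a y.

Definition solid {X : Type} (op : X -> X -> X) (z : X) : Prop :=
  forall x y w, same_branch op z x y -> op (op x y) w = op (op x w) y.


(* Solidity swaps the last two arguments of (x * a) * (x * a) = 0, giving
   (x * (x * a)) * a = 0, i.e. x * (x * a) <= a; minimality of a then forces
   equality. *)

Section SolidWeakBCC.

Context {X : Type} {op : X -> X -> X} {z : X}.
Hypothesis op_xx : forall x, op x x = z.

Lemma minimal_same_branch {a x} :
  minimal_elt op z a -> in_branch op z a x -> same_branch op z x a.
Proof.
  intros Ha Hx. exists a. repeat split; [exact Ha | exact Hx | apply op_xx].
Qed.

Lemma solid_le_branch_root {a x} :
  solid op z -> minimal_elt op z a -> in_branch op z a x ->
  bcc_le op z (op x (op x a)) a.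
Proof.
  intros Hsolid Ha Hx. unfold bcc_le.
  rewrite <- (Hsolid x a (op x a) (minimal_same_branch Ha Hx)).
  apply op_xx.
Qed.

End SolidWeakBCC.

Theorem corollary3p4 (X : Type) (op : X -> X -> X) (z : X) :
  weak_BCC op z -> solid op z ->
  forall a x, minimal_elt op z a -> in_branch op z a x ->
  op x (op x a) = a.
Proof.
  intros [_ [op_xx _]] Hsolid a x Ha Hx.
  apply Ha, (solid_le_branch_root op_xx Hsolid Ha Hx).
Qed.
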